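(* Let $m\in\mathbb{Z}$. Then there exists $N$ (depending on $m$) such that for all $n\ge N$ the Hankel determinants $$\det\big(f(i+j,q^{2m+1},q)\big)_{i,j=0}^n,\quad \det\big(F(2i+2j,q^m,q)\big)_{i,j=0}^n,\quad \det\big(F(2i+2j+1,q^m,q)\big)_{i,j=0}^n,\quad \det\big(F(i+j,q^m,q)\big)_{i,j=0}^n$$ all vanish.
   Context: $q$ is an indeterminate; all quantities lie in $\mathbb{Q}(q)$. $(x;q)_n=\prod_{j=0}^{n-1}(1-q^jx)$. The Gaussian binomial coefficient is $\begin{bmatrix} n\\ j\end{bmatrix}_q=\frac{(q;q)_n}{(q;q)_j(q;q)_{n-j}}$ for $0\le j\le n$ and $0$ otherwise. The normalized Rogers–Szegö polynomials are $f(n,s,q)=\dfrac{\sum_{j=0}^n s^j\begin{bmatrix} n\\ j\end{bmatrix}_{q^2}}{(-q;q)_n}$ and $F(n,s,q)=\dfrac{\sum_{j=0}^n(-s)^j\begin{bmatrix} n\\ j\end{bmatrix}_{q}}{(q;q^2)_{\lfloor (n+1)/2\rfloor}}$ (for negative exponents, $q^{a}$ with $a<0$ is the element $1/q^{-a}$ of $\mathbb{Q}(q)$). *)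

From HB Require Import structures.
From mathcomp Require Import all_boot all_order all_algebra.
Set Implicit Arguments. Unset Strict Implicit. Unset Printing Implicit Defensive.
Import Order.TTheory GRing.Theory Num.Theory.
Local Open Scope ring_scope.

Definition Qq : fieldType := {fraction {poly rat}}.
Definition q : Qq := @tofrac _ ('X : {poly rat}).

Definition qpoch (x b : Qq) (n : nat) : Qq := \prod_(j < n) (1 - b ^+ j * x).

Definition gauss_binom (b : Qq) (n j : nat) : Qq :=
  if (j <= n)%N then qpoch b b n / (qpoch b b j * qpoch b b (n - j)) else 0.

Definition f (n : nat) (s : Qq) : Qq :=
  (\sum_(j < n.+1) s ^+ j * gauss_binom (q ^+ 2) n j) / qpoch (- q) q n.

Definition F (n : nat) (s : Qq) : Qq :=
  (\sum_(j < n.+1) (- s) ^+ j * gauss_binom q n j) / qpoch q (q ^+ 2) (n.+1)./2.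

From HB Require Import structures.
From mathcomp Require Import all_boot all_order all_algebra ring zify.
Import Order.TTheory GRing.Theory Num.Theory.
Set Implicit Arguments.
Unset Strict Implicit.
Unset Printing Implicit Defensive.
Local Open Scope ring_scope.

(* Both sequences n |-> f(n, s) and n |-> F(n, s) obey q-difference equations in s,
     f(n+1, q^2 s) = f(n+1, s) - s (1 - q^(n+1)) f(n, s),
     F(n+1, q s)   = F(n+1, s) + s w(n+1) F(n, s),
   with w(n) = 1 for odd n and 1 - q^n for even n; both follow from the q-Pascal
   and absorption identities for Gaussian binomials.  At the base points,
   f(n, q) = 1 and F(n, 1) = [n even], and s |-> 1/s multiplies them by a geometric
   sequence.  Hence, by induction on |m|, n |-> f(n, q^(2m+1)) and n |-> F(n, q^m)
   are finite sums of geometric sequences, and so are their subsequences along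
   2n and 2n + 1.  A Hankel matrix built from a sum of r geometric sequences
   factors through an r-dimensional space, so its determinant vanishes beyond
   size r. *)

Section QBinomial.
Variable K : fieldType.

Definition qpochhammer (a b : K) (n : nat) : K := \prod_(j < n) (1 - b ^+ j * a).

Definition qbinomial (b : K) (n j : nat) : K :=
  if (j <= n)%N then
    qpochhammer b b n / (qpochhammer b b j * qpochhammer b b (n - j))
  else 0.

Definition rogers_szego (b : K) (n : nat) (s : K) : K :=
  \sum_(j < n.+1) s ^+ j * qbinomial b n j.

Lemma qpochhammer0 a b : qpochhammer a b 0 = 1.
Proof. by rewrite /qpochhammer big_ord0. Qed.

Lemma qpochhammerS a b n :
  qpochhammer a b n.+1 = qpochhammer a b n * (1 - b ^+ n * a).
Proof. by rewrite /qpochhammer big_ord_recr. Qed.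

Section NotRootOfUnity.
Variable b : K.
Hypothesis b_nroot : forall k, (0 < k)%N -> b ^+ k != 1.
Local Notation qfact := (qpochhammer b b).
Local Notation qbin := (qbinomial b).
Local Notation rs := (rogers_szego b).

Lemma subr1X_neq0 k : (0 < k)%N -> 1 - b ^+ k != 0.
Proof. by move=> k_gt0; rewrite subr_eq0 eq_sym b_nroot. Qed.

Let subr1X_neq0S k : 1 - b ^+ k.+1 != 0.
Proof. exact: subr1X_neq0. Qed.

Lemma qfactS n : qfact n.+1 = qfact n * (1 - b ^+ n.+1).
Proof. by rewrite qpochhammerS exprSr. Qed.

Lemma qfact_neq0 n : qfact n != 0.
Proof.
elim: n => [|n IHn]; first by rewrite qpochhammer0 oner_eq0.
by rewrite qfactS mulf_neq0.
Qed.

Lemma qbinomial_gt n j : (n < j)%N -> qbin n j = 0.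
Proof. by rewrite /qbinomial ltnNge => /negbTE ->. Qed.

Lemma qbinomialn0 n : qbin n 0 = 1.
Proof. by rewrite /qbinomial subn0 qpochhammer0 mul1r divff ?qfact_neq0. Qed.

Lemma qbinomial_sym n j : (j <= n)%N -> qbin n (n - j) = qbin n j.
Proof.
by move=> le_jn; rewrite /qbinomial leq_subr le_jn subKn // (mulrC (qfact (n - j))).
Qed.

Lemma qbinomial_absorb n j :
  (1 - b ^+ j.+1) * qbin n.+1 j.+1 = (1 - b ^+ n.+1) * qbin n j.
Proof.
rewrite /qbinomial ltnS subSS; case: leqP => _; last by rewrite !mulr0.
by rewrite !qfactS; field; rewrite !qfact_neq0 ?subr1X_neq0S.
Qed.

(* Truncated subtraction makes both sides vanish once [n <= j]. *)
Lemma qbinomial_succr n j :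
  (1 - b ^+ j.+1) * qbin n j.+1 = (1 - b ^+ (n - j)) * qbin n j.
Proof.
have [lt_jn|le_nj] := ltnP j n; last first.
  by rewrite qbinomial_gt ?ltnS // (eqnP le_nj) subrr !mul0r mulr0.
rewrite /qbinomial lt_jn ltnW //.
have -> : (n - j = (n - j.+1).+1)%N by rewrite subnSK.
by rewrite !qfactS; field; rewrite !qfact_neq0 ?subr1X_neq0S.
Qed.

Lemma qbinomial_pascal n j :
  qbin n.+1 j.+1 = b ^+ j.+1 * qbin n j.+1 + qbin n j.
Proof.
have [le_jn|lt_nj] := leqP j n; last first.
  by rewrite !qbinomial_gt ?mulr0 ?addr0 // ltnW.
apply: (mulfI (subr1X_neq0S j)).
rewrite qbinomial_absorb mulrDr [_ * (b ^+ _ * _)]mulrCA qbinomial_succr.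
have -> : b ^+ n.+1 = b ^+ j.+1 * b ^+ (n - j) by rewrite -exprD addSn subnKC.
ring.
Qed.

Lemma rogers_szego0 s : rs 0 s = 1.
Proof. by rewrite /rogers_szego big_ord1 qbinomialn0 mulr1. Qed.

Lemma rogers_szegoE n s : rs n s = 1 + \sum_(j < n) s ^+ j.+1 * qbin n j.+1.
Proof. by rewrite /rogers_szego big_ord_recl expr0 mul1r qbinomialn0. Qed.

Lemma rogers_szego_scale n s :
  rs n.+1 (b * s) = rs n.+1 s - s * (1 - b ^+ n.+1) * rs n s.
Proof.
apply/eqP; rewrite eq_sym subr_eq addrC -subr_eq !(rogers_szegoE n.+1).
rewrite opprD addrACA subrr add0r -sumrB mulr_sumr; apply/eqP/eq_bigr => j _.
have -> : s ^+ j.+1 * qbin n.+1 j.+1 - (b * s) ^+ j.+1 * qbin n.+1 j.+1 =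
          s ^+ j.+1 * ((1 - b ^+ j.+1) * qbin n.+1 j.+1) by rewrite exprMn; ring.
by rewrite qbinomial_absorb exprS; ring.
Qed.

Lemma rogers_szegoS n s : rs n.+1 s = rs n (b * s) + s * rs n s.
Proof.
have -> : rs n (b * s) = \sum_(j < n.+2) (b * s) ^+ j * qbin n j.
  by rewrite big_ord_recr /= qbinomial_gt // mulr0 addr0.
rewrite /rogers_szego !(big_ord_recl n.+1) !expr0 !mul1r !qbinomialn0 -addrA.
congr (_ + _); rewrite mulr_sumr -big_split; apply: eq_bigr => j _ /=.
by rewrite /bump /= add1n qbinomial_pascal exprMn exprS; ring.
Qed.

Lemma rogers_szego_rev n s : s != 0 -> s ^+ n * rs n s^-1 = rs n s.
Proof.
move=> s_neq0; rewrite /rogers_szego (reindex_inj rev_ord_inj) /= mulr_sumr.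
apply: eq_bigr => j _; have le_jn : (j <= n)%N by rewrite -ltnS.
rewrite subSS qbinomial_sym // exprVn -{1}(subnK le_jn) exprD.
by field; rewrite expf_neq0.
Qed.

End NotRootOfUnity.

End QBinomial.

Section PowerSum.
Variable K : fieldType.

(* The ratios are required to be nonzero so that a power sum extends one step backwards. *)
Definition power_sum (a : nat -> K) := exists (I : finType) (c y : I -> K),
  (forall t, y t != 0) /\ forall n, a n = \sum_t c t * y t ^+ n.

Definition hankel (a : nat -> K) (n : nat) : 'M[K]_n := \matrix_(i, j) a (i + j)%N.

Lemma eq_power_sum a1 a2 : a1 =1 a2 -> power_sum a1 -> power_sum a2.
Proof.
by move=> eq_a [I [c [y [y_neq0 a1E]]]]; exists I, c, y; split=> // n; rewrite -eq_a.
Qed.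

Lemma power_sum_geom c y : y != 0 -> power_sum (fun n => c * y ^+ n).
Proof.
by move=> y_neq0; exists 'I_1, (fun=> c), (fun=> y); split=> // n; rewrite big_ord1.
Qed.

Lemma power_sum_cst c : power_sum (fun=> c).
Proof.
apply: (eq_power_sum _ (power_sum_geom c (oner_neq0 K))) => n.
by rewrite expr1n mulr1.
Qed.

Lemma power_sumD a1 a2 :
  power_sum a1 -> power_sum a2 -> power_sum (fun n => a1 n + a2 n).
Proof.
move=> [I1 [c1 [y1 [y1_neq0 a1E]]]] [I2 [c2 [y2 [y2_neq0 a2E]]]].
exists (I1 + I2)%type, (fun t => match t with inl t1 => c1 t1 | inr t2 => c2 t2 end),
  (fun t => match t with inl t1 => y1 t1 | inr t2 => y2 t2 end).
by split=> [[]|n] //; rewrite big_sumType a1E a2E.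
Qed.

Lemma power_sumM a1 a2 :
  power_sum a1 -> power_sum a2 -> power_sum (fun n => a1 n * a2 n).
Proof.
move=> [I1 [c1 [y1 [y1_neq0 a1E]]]] [I2 [c2 [y2 [y2_neq0 a2E]]]].
exists (I1 * I2)%type, (fun t => c1 t.1 * c2 t.2), (fun t => y1 t.1 * y2 t.2).
split=> [t|n]; first exact: mulf_neq0.
rewrite a1E a2E big_distrlr pair_bigA; apply: eq_bigr => t _ /=.
by rewrite exprMn; ring.
Qed.

Lemma power_sumZ c a : power_sum a -> power_sum (fun n => c * a n).
Proof. exact: power_sumM (power_sum_cst c). Qed.

Lemma power_sumB a1 a2 :
  power_sum a1 -> power_sum a2 -> power_sum (fun n => a1 n - a2 n).
Proof.
move=> pa1 pa2; apply: (eq_power_sum _ (power_sumD pa1 (power_sumZ (-1) pa2))).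
by move=> n; rewrite mulN1r.
Qed.

Lemma power_sum_unshift a :
  power_sum a -> exists2 a', power_sum a' & forall n, a' n.+1 = a n.
Proof.
move=> [I [c [y [y_neq0 aE]]]].
exists (fun n => \sum_t (c t / y t) * y t ^+ n); first by exists I, (fun t => c t / y t), y.
by move=> n; rewrite aE; apply: eq_bigr => t _; rewrite exprS mulrA divfK.
Qed.

Lemma power_sum_affine a k l : power_sum a -> power_sum (fun n => a (k * n + l)%N).
Proof.
move=> [I [c [y [y_neq0 aE]]]].
exists I, (fun t => c t * y t ^+ l), (fun t => y t ^+ k).
split=> [t|n]; first exact: expf_neq0.
rewrite aE; apply: eq_bigr => t _.
by rewrite -exprM exprD mulrAC mulrA mulnC.
Qed.

(* A Hankel matrix of a sum of [#|I|] geometric sequences factors through [K^#|I|]. *)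
Lemma power_sum_hankel_det a : power_sum a ->
  exists N, forall n, (N < n)%N -> \det (hankel a n) = 0.
Proof.
move=> [I [c [y [_ aE]]]]; exists #|I| => n lt_In.
set A := \matrix_(i < n, k < #|I|) (c (enum_val k) * y (enum_val k) ^+ i).
set B := \matrix_(k < #|I|, j < n) (y (enum_val k) ^+ j).
have -> : hankel a n = A *m B.
  apply/matrixP => i j; rewrite !mxE aE.
  under [RHS]eq_bigr do rewrite !mxE -mulrA -exprD.
  transitivity (\sum_(t in I) c t * y t ^+ (i + j)).
    by apply: eq_bigl => t; rewrite inE.
  exact: big_enum_val.
apply/eqP; apply: contraTT lt_In => /negbTE det_neq0.
have AB_unit : A *m B \in unitmx by rewrite unitmxE unitfE det_neq0.
rewrite -leqNgt -{1}(mxrank_unit AB_unit).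
exact: leq_trans (mxrankM_maxl A B) (rank_leq_col A).
Qed.

(* That is, [b n = a n + g n * a (n - 1)]; [g 0 = 0] makes the missing term [a (-1)]
   irrelevant. *)
Lemma power_sum_step (a g b : nat -> K) :
  power_sum a -> power_sum g -> g 0 = 0 -> b 0 = a 0 ->
  (forall n, b n.+1 = a n.+1 + g n.+1 * a n) -> power_sum b.
Proof.
move=> pa pg g0 b0 bS; have [a' pa' a'S] := power_sum_unshift pa.
apply: (eq_power_sum _ (power_sumD pa (power_sumM pg pa'))) => -[|n].
  by rewrite g0 mul0r addr0 b0.
by rewrite bS a'S.
Qed.

End PowerSum.

Lemma nat_parity n : exists k, n = k.*2 \/ n = k.*2.+1.
Proof.
exists n./2; case: (odd n) (odd_double_half n) => e; [right | left].
  by rewrite -{1}e add1n.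
by rewrite -{1}e add0n.
Qed.

Section NormalizedRogersSzego.
Variables (K : fieldType) (x : K).
Hypothesis x_neq0 : x != 0.
Hypothesis x_nroot : forall k, (0 < k)%N -> x ^+ k != 1.

(* With [x := q] these are the normalized Rogers-Szego polynomials [f] and [F]. *)
Definition rsf (n : nat) (s : K) : K :=
  rogers_szego (x ^+ 2) n s / qpochhammer (- x) x n.

Definition rsF (n : nat) (s : K) : K :=
  rogers_szego x n (- s) / qpochhammer x (x ^+ 2) n.+1./2.

(* The factor relating consecutive denominators of [rsF], see [rsF_denomS]. *)
Definition rsF_weight (n : nat) : K := if odd n then 1 else 1 - x ^+ n.

Let sqr_nroot k : (0 < k)%N -> (x ^+ 2) ^+ k != 1.
Proof. by move=> k_gt0; rewrite -exprM x_nroot ?muln_gt0. Qed.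

Let subr1X_neq0S k : 1 - x ^+ k.+1 != 0.
Proof. exact: subr1X_neq0. Qed.

Let addr1X_neq0S k : 1 + x ^+ k.+1 != 0.
Proof.
have := subr1X_neq0 sqr_nroot (ltn0Sn k).
have -> : 1 - (x ^+ 2) ^+ k.+1 = (1 - x ^+ k.+1) * (1 + x ^+ k.+1).
  by rewrite -exprM mul2n -addnn exprD; ring.
by rewrite mulf_eq0 negb_or => /andP[].
Qed.

Local Notation P := (qpochhammer (- x) x).
Local Notation D n := (qpochhammer x (x ^+ 2) n.+1./2).

Lemma qpochhammerN_S n : P n.+1 = P n * (1 + x ^+ n.+1).
Proof. by rewrite qpochhammerS mulrN opprK exprSr. Qed.

Lemma qpochhammerN_neq0 n : P n != 0.
Proof.
elim: n => [|n IHn]; first by rewrite qpochhammer0 oner_eq0.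
by rewrite qpochhammerN_S mulf_neq0.
Qed.

Lemma rsf0 s : rsf 0 s = 1.
Proof. by rewrite /rsf rogers_szego0 // qpochhammer0 divr1. Qed.

Lemma rsf_scale n s :
  rsf n.+1 (x ^+ 2 * s) = rsf n.+1 s - s * (1 - x ^+ n.+1) * rsf n s.
Proof.
rewrite /rsf rogers_szego_scale // qpochhammerN_S -exprM mulnC exprM.
by field; rewrite qpochhammerN_neq0 addr1X_neq0S.
Qed.

Lemma rsf_base n : rsf n x = 1.
Proof.
suff [rsE _] : rogers_szego (x ^+ 2) n x = P n /\ rogers_szego (x ^+ 2) n.+1 x = P n.+1.
  by rewrite /rsf rsE divff ?qpochhammerN_neq0.
elim: n => [|n [IHn IHn1]].
  by rewrite rogers_szegoS // !rogers_szego0 // qpochhammerN_S qpochhammer0 mulr1 mul1r.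
split=> //; rewrite rogers_szegoS // rogers_szego_scale // IHn IHn1 !qpochhammerN_S.
by rewrite -exprM mulnC exprM [x ^+ n.+2]exprS; ring.
Qed.

Lemma rsf_inv n s : s != 0 -> rsf n s^-1 = s^-1 ^+ n * rsf n s.
Proof.
move=> s_neq0; rewrite /rsf -(rogers_szego_rev (x ^+ 2) n s_neq0) exprVn.
by field; rewrite qpochhammerN_neq0 expf_neq0.
Qed.

Lemma qpochhammer_odd_S k :
  qpochhammer x (x ^+ 2) k.+1 = qpochhammer x (x ^+ 2) k * (1 - x ^+ k.*2.+1).
Proof. by rewrite qpochhammerS -exprM -exprSr mul2n. Qed.

Lemma qpochhammer_odd_neq0 k : qpochhammer x (x ^+ 2) k != 0.
Proof.
elim: k => [|k IHk]; first by rewrite qpochhammer0 oner_eq0.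
by rewrite qpochhammer_odd_S mulf_neq0.
Qed.

Lemma rsF_denomS n : (1 - x ^+ n.+1) * D n = rsF_weight n.+1 * D n.+1.
Proof.
rewrite /rsF_weight /=; have [k [->|->]] := nat_parity n.
  by rewrite uphalf_double half_double qpochhammer_odd_S /= odd_double /=; ring.
by rewrite /= odd_double /= half_double uphalf_double.
Qed.

Lemma rsF0 s : rsF 0 s = 1.
Proof. by rewrite /rsF rogers_szego0 // qpochhammer0 divr1. Qed.

Lemma rsF_scale n s :
  rsF n.+1 (x * s) = rsF n.+1 s + s * rsF_weight n.+1 * rsF n s.
Proof.
have weightE : rsF_weight n.+1 = (1 - x ^+ n.+1) * D n / D n.+1.
  by rewrite rsF_denomS mulfK ?qpochhammer_odd_neq0.
rewrite /rsF -mulrN rogers_szego_scale // weightE.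
by field; rewrite !qpochhammer_odd_neq0.
Qed.

Lemma rsF_base n : rsF n 1 = (~~ odd n)%:R.
Proof.
have rs_succ2 k : rogers_szego x k.+2 (-1) = (1 - x ^+ k.+1) * rogers_szego x k (-1).
  by rewrite rogers_szegoS // rogers_szego_scale //; ring.
rewrite /rsF; have [k [->|->]] := nat_parity n; rewrite /= odd_double /=.
  suff -> : rogers_szego x k.*2 (-1) = qpochhammer x (x ^+ 2) k.
    by rewrite uphalf_double divff ?qpochhammer_odd_neq0.
  elim: k => [|k IHk]; first by rewrite rogers_szego0 // qpochhammer0.
  by rewrite doubleS rs_succ2 IHk qpochhammer_odd_S mulrC.
suff -> : rogers_szego x k.*2.+1 (-1) = 0 by rewrite mul0r.
elim: k => [|k IHk]; last by rewrite doubleS rs_succ2 IHk mulr0.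
by rewrite rogers_szegoS // !rogers_szego0 //; ring.
Qed.

Lemma rsF_inv n s : s != 0 -> rsF n s^-1 = (- s)^-1 ^+ n * rsF n s.
Proof.
move=> s_neq0; have Ns_neq0 : - s != 0 by rewrite oppr_eq0.
rewrite /rsF -invrN -(rogers_szego_rev x n Ns_neq0) exprVn.
by field; rewrite qpochhammer_odd_neq0 expf_neq0.
Qed.


Lemma power_sum_subr1X : power_sum (fun n => 1 - x ^+ n).
Proof.
apply: (eq_power_sum _ (power_sumB (power_sum_cst 1) (power_sum_geom 1 x_neq0))).
by move=> n; rewrite mul1r.
Qed.

Lemma power_sum_rsf_pos k : power_sum (fun n => rsf n (x ^+ (2 * k + 1))).
Proof.
elim: k => [|k IHk].
  by apply: (eq_power_sum _ (power_sum_cst 1)) => n; rewrite rsf_base.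
have -> : x ^+ (2 * k.+1 + 1) = x ^+ 2 * x ^+ (2 * k + 1) by rewrite -exprD mulnS.
apply: (power_sum_step IHk (power_sumZ (- x ^+ (2 * k + 1)) power_sum_subr1X)).
- by rewrite subrr mulr0.
- by rewrite !rsf0.
- by move=> n; rewrite rsf_scale; ring.
Qed.

Lemma power_sum_rsf (m : int) : power_sum (fun n => rsf n (x ^ (2 * m + 1))).
Proof.
case: m => k; first by rewrite -PoszM -PoszD; exact: power_sum_rsf_pos.
have -> : (2 * Negz k + 1 = - Posz (2 * k + 1))%R by rewrite NegzE; lia.
set s := x ^+ (2 * k + 1); have s_neq0 : s != 0 by rewrite expf_neq0.
have -> : x ^ (- Posz (2 * k + 1)) = s^-1 by rewrite exprnN.
have sV_neq0 : s^-1 != 0 by rewrite invr_eq0.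
apply: (eq_power_sum _ (power_sumM (power_sum_geom 1 sV_neq0) (power_sum_rsf_pos k))).
by move=> n; rewrite rsf_inv // mul1r.
Qed.

Section CharNot2.
Hypothesis two_neq0 : (2 : K) != 0.

Lemma power_sum_rsF_weight : power_sum rsF_weight.
Proof.
have x_neq0N : - x != 0 by rewrite oppr_eq0.
have := power_sumD (power_sum_geom 2^-1 x_neq0) (power_sum_geom 2^-1 x_neq0N).
move=> /(power_sumB (power_sum_cst 1)); apply: eq_power_sum => n.
rewrite /rsF_weight exprNn -signr_odd; case: (odd n); rewrite ?expr1 ?expr0.
  by rewrite mulN1r mulrN subrr subr0.
by rewrite mul1r; field.
Qed.

Lemma power_sum_rsF_pos k : power_sum (fun n => rsF n (x ^+ k)).
Proof.
elim: k => [|k IHk].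
  have m1_neq0 : (-1 : K) != 0 by rewrite oppr_eq0 oner_eq0.
  have := power_sumD (power_sum_geom 2^-1 (oner_neq0 K)) (power_sum_geom 2^-1 m1_neq0).
  apply: eq_power_sum => n; rewrite expr0 rsF_base expr1n -signr_odd.
  by case: (odd n); rewrite ?expr1 ?expr0 /=; field.
apply: (power_sum_step IHk (power_sumZ (x ^+ k) power_sum_rsF_weight)).
- by rewrite /rsF_weight /= subrr mulr0.
- by rewrite !rsF0.
- by move=> n; rewrite exprS rsF_scale mulrA.
Qed.

Lemma power_sum_rsF (m : int) : power_sum (fun n => rsF n (x ^ m)).
Proof.
case: m => k; first exact: power_sum_rsF_pos.
set s := x ^+ k.+1; have s_neq0 : s != 0 by rewrite expf_neq0.
have -> : x ^ Negz k = s^-1 by rewrite NegzE exprnN.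
have sNV_neq0 : (- s)^-1 != 0 by rewrite invr_eq0 oppr_eq0.
apply: (eq_power_sum _ (power_sumM (power_sum_geom 1 sNV_neq0) (power_sum_rsF_pos k.+1))).
by move=> n; rewrite rsF_inv // mul1r.
Qed.

End CharNot2.

End NormalizedRogersSzego.

Lemma q_neq0 : q != 0.
Proof. by rewrite tofrac_eq0 polyX_eq0. Qed.

Lemma q_nroot k : (0 < k)%N -> q ^+ k != 1.
Proof.
rewrite lt0n; apply: contra => /eqP.
rewrite -tofracXn -tofrac1 => /eqP; rewrite tofrac_eq => /eqP Xk_eq1.
have := congr1 (fun p : {poly rat} => size p) Xk_eq1.
by rewrite size_polyXn size_poly1 => -[->].
Qed.

Lemma Qq_two_neq0 : (2 : Qq) != 0.
Proof. by rewrite -(rmorph_nat (@tofrac {poly rat})) tofrac_eq0 -polyC_natr polyC_eq0. Qed.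

Theorem corollary3p1 (m : int) :
  exists N : nat, forall n : nat, (N <= n)%N ->
    [/\ \det (\matrix_(i < n.+1, j < n.+1) f (i + j)%N (q ^ (2 * m + 1))) = 0,
        \det (\matrix_(i < n.+1, j < n.+1) F (2 * i + 2 * j)%N (q ^ m)) = 0,
        \det (\matrix_(i < n.+1, j < n.+1) F (2 * i + 2 * j + 1)%N (q ^ m)) = 0
      & \det (\matrix_(i < n.+1, j < n.+1) F (i + j)%N (q ^ m)) = 0].
Proof.
have pF := power_sum_rsF q_neq0 q_nroot Qq_two_neq0 m.
have [N1 det1] := power_sum_hankel_det (power_sum_rsf q_neq0 q_nroot m).
have [N2 det2] := power_sum_hankel_det (power_sum_affine 2 0 pF).
have [N3 det3] := power_sum_hankel_det (power_sum_affine 2 1 pF).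
have [N4 det4] := power_sum_hankel_det pF.
exists (maxn (maxn N1 N2) (maxn N3 N4)) => n.
rewrite !geq_max => /andP[/andP[le1 le2] /andP[le3 le4]]; split.
- exact: det1.
- have -> : \matrix_(i < n.+1, j < n.+1) F (2 * i + 2 * j)%N (q ^ m) =
            hankel (fun k => rsF q (2 * k + 0) (q ^ m)) n.+1.
    by apply/matrixP => i j; rewrite !mxE addn0 mulnDr.
  exact: det2.
- have -> : \matrix_(i < n.+1, j < n.+1) F (2 * i + 2 * j + 1)%N (q ^ m) =
            hankel (fun k => rsF q (2 * k + 1) (q ^ m)) n.+1.
    by apply/matrixP => i j; rewrite !mxE mulnDr.
  exact: det3.
- exact: det4.
Qed.
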